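(* Let $k$ be a commutative ring, $A$ an associative $k$-algebra and $Q=\sum_ix_i\otimes y_i\in C_{A\otimes_kA}(A)$. Define $\mathrm{R}=Q\tau\in\operatorname{End}_k(A\otimes_kA)$, i.e. $\mathrm{R}(a\otimes b)=Q\cdot(b\otimes a)=\sum_i x_ib\otimes y_ia$, where $\tau$ is the twist map. Then $\mathrm{R}$ is a solution of the quantum Yang–Baxter equation $$\mathrm{R}^{12}\circ\mathrm{R}^{13}\circ\mathrm{R}^{23}=\mathrm{R}^{23}\circ\mathrm{R}^{13}\circ\mathrm{R}^{12}.$$
   Context: $C_{A\otimes_kA}(A)=\{\sum_i x_i\otimes y_i\in A\otimes_kA:\ \sum_i ax_i\otimes y_i=\sum_i x_i\otimes y_ia\ \text{for all }a\in A\}$. For $\mathrm{R}\in\operatorname{End}_k(A\otimes_kA)$: $\mathrm{R}^{12}=\mathrm{R}\otimes\operatorname{Id}$, $\mathrm{R}^{23}=\operatorname{Id}\otimes\mathrm{R}$, $\mathrm{R}^{13}=(\operatorname{Id}\otimes\tau)(\mathrm{R}\otimes\operatorname{Id})(\operatorname{Id}\otimes\tau)$ in $\operatorname{End}_k(A\otimes_kA\otimes_kA)$, where $\tau(a\otimes b)=b\otimes a$. *)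

From HB Require Import structures.
From mathcomp Require Import all_boot all_order all_algebra.
Set Implicit Arguments. Unset Strict Implicit. Unset Printing Implicit Defensive.
Import GRing.Theory.
Local Open Scope ring_scope.

Definition klinear (k : pzRingType) (U V : lmodType k) (g : U -> V) : Prop :=
  forall (c : k) (u v : U), g (c *: u + v) = c *: g u + g v.

(* The bilinear map t : A x A -> T exhibits T as the tensor product A (x)_k A
   (universal property: every k-bilinear map factors uniquely through t). *)
Definition is_tensor2 (k : comPzRingType) (A T : lmodType k) (t : A -> A -> T) : Prop :=
  (forall b, klinear (fun a => t a b)) /\ (forall a, klinear (t a)) /\
  forall (M : lmodType k) (f : A -> A -> M),
    (forall b, klinear (fun a => f a b)) -> (forall a, klinear (f a)) ->
    (exists g : T -> M, klinear g /\ forall a b, g (t a b) = f a b) /\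
    (forall g1 g2 : T -> M, klinear g1 -> klinear g2 ->
        (forall a b, g1 (t a b) = g2 (t a b)) -> forall x, g1 x = g2 x).

Definition is_tensor3 (k : comPzRingType) (A T : lmodType k) (t : A -> A -> A -> T) : Prop :=
  (forall b c, klinear (fun a => t a b c)) /\ (forall a c, klinear (fun b => t a b c)) /\
  (forall a b, klinear (t a b)) /\
  forall (M : lmodType k) (f : A -> A -> A -> M),
    (forall b c, klinear (fun a => f a b c)) -> (forall a c, klinear (fun b => f a b c)) ->
    (forall a b, klinear (f a b)) ->
    (exists g : T -> M, klinear g /\ forall a b c, g (t a b c) = f a b c) /\
    (forall g1 g2 : T -> M, klinear g1 -> klinear g2 ->
        (forall a b c, g1 (t a b c) = g2 (t a b c)) -> forall x, g1 x = g2 x).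

From HB Require Import structures.
From mathcomp Require Import all_boot all_order all_algebra.
Import GRing.Theory.
Local Open Scope ring_scope.

(* Centrality of Q means that a factor a may be moved from the left of the first
   tensor leg to the right of the second one, inside any bilinear expression in
   the two legs.  Expanding both sides of the Yang-Baxter equation on a pure
   tensor a (x) b (x) c gives two triple sums over copies of Q; two such moves
   turn the first sum into the second. *)

Section KLinear.

Context {k : pzRingType}.

Lemma klinear0 {U V : lmodType k} (g : U -> V) : klinear g -> g 0 = 0.
Proof.
move=> lin_g; have := lin_g 1 0 0; rewrite !scale1r addr0 => g0.
by apply: (addrI (g 0)); rewrite addr0 -g0.
Qed.

Lemma klinearD {U V : lmodType k} (g : U -> V) :
  klinear g -> forall u v, g (u + v) = g u + g v.
Proof. by move=> lin_g u v; rewrite -[u in LHS]scale1r lin_g scale1r. Qed.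

Lemma klinear_sum {U V : lmodType k} (g : U -> V) n (F : 'I_n -> U) :
  klinear g -> g (\sum_(i < n) F i) = \sum_(i < n) g (F i).
Proof. by move=> lin_g; apply: big_morph; [exact: klinearD | exact: klinear0]. Qed.

Lemma klinear_comp {U V W : lmodType k} {g : U -> V} {h : V -> W} :
  klinear g -> klinear h -> klinear (h \o g).
Proof. by move=> lin_g lin_h c u v /=; rewrite lin_g lin_h. Qed.

Lemma klinear_mull {A : algType k} (u : A) : klinear (fun p : A => u * p).
Proof. by move=> c p q; rewrite mulrDr scalerAr. Qed.

Lemma klinear_mulr {A : lalgType k} (v : A) : klinear (fun p : A => p * v).
Proof. by move=> c p q; rewrite mulrDl -scalerAl. Qed.

End KLinear.

Section Centralizer.

Context {k : comPzRingType} {A : algType k}.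
Context {T2 : lmodType k} {t2 : A -> A -> T2}.
Hypothesis tensor_t2 : is_tensor2 t2.
Context {n : nat} {x y : 'I_n -> A}.
Hypothesis centralQ :
  forall a : A, \sum_(i < n) t2 (a * x i) (y i) = \sum_(i < n) t2 (x i) (y i * a).

Lemma centralizer_bilinear {M : lmodType k} (F : A -> A -> M) :
  (forall q, klinear (F^~ q)) -> (forall p, klinear (F p)) ->
  forall a, \sum_(i < n) F (a * x i) (y i) = \sum_(i < n) F (x i) (y i * a).
Proof.
move=> linF1 linF2 a; have [_ [_ univ]] := tensor_t2.
have [[g [lin_g gE]] _] := univ M F linF1 linF2.
under eq_bigr do rewrite -gE.
under [RHS]eq_bigr do rewrite -gE.
by rewrite -!klinear_sum // centralQ.
Qed.

Context {T3 : lmodType k} {t3 : A -> A -> A -> T3}.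
Hypothesis lin_t3_1 : forall b c, klinear (fun a => t3 a b c).
Hypothesis lin_t3_2 : forall a c, klinear (fun b => t3 a b c).
Hypothesis lin_t3_3 : forall a b, klinear (t3 a b).

Lemma centralizer_t3_12 (f g : A -> A) (w : A) : klinear f -> klinear g ->
  forall a, \sum_(i < n) t3 (f (a * x i)) (g (y i)) w
          = \sum_(i < n) t3 (f (x i)) (g (y i * a)) w.
Proof.
move=> lin_f lin_g.
apply: (centralizer_bilinear (fun p q => t3 (f p) (g q) w)) => [q | p].
- exact: (klinear_comp lin_f (lin_t3_1 (g q) w)).
- exact: (klinear_comp lin_g (lin_t3_2 (f p) w)).
Qed.

Lemma centralizer_t3_23 (f g : A -> A) (u : A) : klinear f -> klinear g ->
  forall a, \sum_(i < n) t3 u (f (a * x i)) (g (y i))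
          = \sum_(i < n) t3 u (f (x i)) (g (y i * a)).
Proof.
move=> lin_f lin_g.
apply: (centralizer_bilinear (fun p q => t3 u (f p) (g q))) => [q | p].
- exact: (klinear_comp lin_f (lin_t3_2 u (g q))).
- exact: (klinear_comp lin_g (lin_t3_3 u (f p))).
Qed.

Lemma yang_baxter_sums (a b c : A) :
  \sum_(i < n) \sum_(j < n) \sum_(l < n)
     t3 (x l * x i * c) (y l * x j * y i * b) (y j * a)
  = \sum_(i < n) \sum_(j < n) \sum_(l < n)
     t3 (x j * c) (x l * y j * x i * b) (y l * y i * a).
Proof.
transitivity (\sum_(i < n) \sum_(l < n) \sum_(j < n)
                t3 (x l * x i * c) (x j * y i * b) (y j * y l * a)).
  apply: eq_bigr => i _; rewrite exchange_big; apply: eq_bigr => l _ /=.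
  have move_yl := centralizer_t3_23 (fun p => p * y i * b) (fun q => q * a)
    (x l * x i * c) (klinear_comp (klinear_mulr _) (klinear_mulr _))
    (klinear_mulr _) (y l).
  by rewrite /= in move_yl; rewrite move_yl; under eq_bigr do rewrite -mulrA.
rewrite exchange_big; under eq_bigr do rewrite exchange_big.
transitivity (\sum_(l < n) \sum_(j < n) \sum_(i < n)
                t3 (x i * c) (x j * (y i * x l) * b) (y j * y l * a)).
  apply: eq_bigr => l _; apply: eq_bigr => j _ /=.
  have move_xl := centralizer_t3_12 (fun p => p * c) (fun q => x j * q * b)
    (y j * y l * a) (klinear_mulr _)
    (klinear_comp (klinear_mull _) (klinear_mulr _)) (x l).
  by rewrite /= in move_xl; rewrite move_xl.
apply: eq_bigr => i _; rewrite exchange_big.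
by apply: eq_bigr => j _; apply: eq_bigr => l _; rewrite !mulrA.
Qed.

End Centralizer.

Lemma tensor3_ext {k : comPzRingType} {A T : lmodType k} {t3 : A -> A -> A -> T}
    {g1 g2 : T -> T} :
  is_tensor3 t3 -> klinear g1 -> klinear g2 ->
  (forall a b c, g1 (t3 a b c) = g2 (t3 a b c)) -> g1 =1 g2.
Proof.
move=> [lin1 [lin2 [lin3 univ]]].
by have [_ uniq] := univ T t3 lin1 lin2 lin3; apply: uniq.
Qed.

Theorem corollary25 (k : comPzRingType) (A : algType k)
  (T2 : lmodType k) (t2 : A -> A -> T2) (HT2 : is_tensor2 t2)
  (T3 : lmodType k) (t3 : A -> A -> A -> T3) (HT3 : is_tensor3 t3)
  (n : nat) (x y : 'I_n -> A)
  (HQ : forall a : A, \sum_(i < n) t2 (a * x i) (y i) = \sum_(i < n) t2 (x i) (y i * a))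
  (R : T2 -> T2) (HRlin : klinear R)
  (HR : forall a b, R (t2 a b) = \sum_(i < n) t2 (x i * b) (y i * a))
  (R12 R13 R23 : T3 -> T3)
  (H12lin : klinear R12) (H13lin : klinear R13) (H23lin : klinear R23)
  (H12 : forall a b c, R12 (t3 a b c) = \sum_(i < n) t3 (x i * b) (y i * a) c)
  (H13 : forall a b c, R13 (t3 a b c) = \sum_(i < n) t3 (x i * c) b (y i * a))
  (H23 : forall a b c, R23 (t3 a b c) = \sum_(i < n) t3 a (x i * c) (y i * b)) :
  forall u : T3, R12 (R13 (R23 u)) = R23 (R13 (R12 u)).
Proof.
have [lin1 [lin2 [lin3 _]]] := HT3.
apply: (tensor3_ext (g1 := R12 \o R13 \o R23) (g2 := R23 \o R13 \o R12) HT3);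
  try by do 2!apply: klinear_comp.
move=> a b c /=.
rewrite H23 !klinear_sum //; under eq_bigr do rewrite H13 klinear_sum //.
under eq_bigr do under eq_bigr do rewrite H12.
rewrite H12 !klinear_sum //; under [RHS]eq_bigr do rewrite H13 klinear_sum //.
under [RHS]eq_bigr do under eq_bigr do rewrite H23.
rewrite /=; under eq_bigr do under eq_bigr do under eq_bigr do rewrite !mulrA.
under [RHS]eq_bigr do under eq_bigr do under eq_bigr do rewrite !mulrA.
exact: (yang_baxter_sums HT2 HQ lin1 lin2 lin3).
Qed.
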